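(* Assume $\theta_i<1$ for all $i$ and $\theta_j>0$ for some $j$. If $\theta_{\max}<1/2$, then for every $x(0)\in\Delta_n$ the trajectory $(V(k),x(k))$ of system (B) converges exponentially fast; in particular $x(k)$ converges exponentially to the unique equilibrium social power $x^*$, i.e. the unique $x^*\in\Delta_n$ with $x^*=(I_n-\Theta)(I_n-W(x^* )^T\Theta)^{-1}\mathbf 1_n/n$.
   Context: Let $n\ge 2$, $\mathbf 1_n$ the all-ones vector, $I_n$ the identity matrix, $\Delta_n=\{x\in\mathbb R^n: x\ge 0,\ \mathbf 1_n^Tx=1\}$. Let $C\in\mathbb R^{n\times n}$ be a nonnegative row-stochastic matrix with zero diagonal, $\theta=(\theta_1,\dots,\theta_n)\in[0,1]^n$, $\Theta=\mathrm{diag}(\theta)$, $\theta_{\max}=\max_j\theta_j$, and for $x\in\mathbb R^n$, $W(x)=\mathrm{diag}(x)+(I_n-\mathrm{diag}(x))C$. System (B): $V(k+1)=\Theta W(x(k))V(k)+I_n-\Theta$, $x(k+1)=V(k+1)^T\mathbf 1_n/n$, $k=0,1,2,\dots$, with $V(0)=I_n$ and $x(0)\in\Delta_n$. An equilibrium is a pair $(V^*,x^* )$ with $V^*$ row-stochastic, $x^*\in\Delta_n$, $V^*=\Theta W(x^* )V^*+I_n-\Theta$, $x^*=(V^* )^T\mathbf 1_n/n$; $x^*$ is its equilibrium social power. *)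

(* classical reals. Vectors in R^n are functions nat -> R,
   n x n matrices are functions nat -> nat -> R; only indices < n matter. *)
From Stdlib Require Import Reals Lra.
Open Scope R_scope.

Definition vec := nat -> R.
Definition mat := nat -> nat -> R.

Fixpoint rsum (n : nat) (f : nat -> R) : R :=
  match n with
  | O => 0
  | S m => rsum m f + f m
  end.

Definition delta (i j : nat) : R := if Nat.eqb i j then 1 else 0.

Definition in_simplex (n : nat) (x : vec) : Prop :=
  (forall i, (i < n)%nat -> 0 <= x i) /\ rsum n x = 1.

Definition row_stochastic (n : nat) (A : mat) : Prop :=
  (forall i j, (i < n)%nat -> (j < n)%nat -> 0 <= A i j) /\
  (forall i, (i < n)%nat -> rsum n (fun j => A i j) = 1).

Definition zero_diag (n : nat) (A : mat) : Prop :=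
  forall i, (i < n)%nat -> A i i = 0.

Definition Wmat (C : mat) (x : vec) : mat :=
  fun i j => delta i j * x i + (1 - x i) * C i j.

Definition stepV (n : nat) (C : mat) (theta : vec) (x : vec) (V : mat) : mat :=
  fun i j => theta i * rsum n (fun l => Wmat C x i l * V l j)
             + delta i j * (1 - theta i).

Definition social_power (n : nat) (V : mat) : vec :=
  fun j => rsum n (fun i => V i j) / INR n.

Fixpoint trajB (n : nat) (C : mat) (theta : vec) (x0 : vec) (k : nat) : mat * vec :=
  match k with
  | O => (delta, x0)
  | S k' =>
      let (V, x) := trajB n C theta x0 k' in
      let V' := stepV n C theta x V in
      (V', social_power n V')
  end.

Definition Vtraj n C theta x0 k := fst (trajB n C theta x0 k).
Definition xtraj n C theta x0 k := snd (trajB n C theta x0 k).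

Definition is_equilibrium (n : nat) (C : mat) (theta : vec) (Vs : mat) (xs : vec) : Prop :=
  row_stochastic n Vs /\ in_simplex n xs /\
  (forall i j, (i < n)%nat -> (j < n)%nat -> Vs i j = stepV n C theta xs Vs i j) /\
  (forall j, (j < n)%nat -> xs j = social_power n Vs j).

Definition mat_invertible (n : nat) (A : mat) : Prop :=
  forall y : vec, (forall i, (i < n)%nat -> rsum n (fun l => A i l * y l) = 0) ->
                  forall i, (i < n)%nat -> y i = 0.

Definition Mmat (C : mat) (theta : vec) (x : vec) : mat :=
  fun i j => delta i j - Wmat C x j i * theta j.

(* x = (I - Theta)(I - W(x)^T Theta)^{-1} 1_n / n, with the inverse existing:
   M invertible and x = (I - Theta) y where y is the (unique) solution of
   M y = 1_n / n. *)
Definition power_formula (n : nat) (C : mat) (theta : vec) (x : vec) : Prop :=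
  mat_invertible n (Mmat C theta x) /\
  exists y : vec,
    (forall i, (i < n)%nat -> rsum n (fun l => Mmat C theta x i l * y l) = 1 / INR n) /\
    (forall i, (i < n)%nat -> x i = (1 - theta i) * y i).

(* Eliminating x(k) = V(k)^T 1/n, system (B) becomes the iteration of
   stepB : V |-> Theta W(V^T 1/n) V + I - Theta on row-stochastic matrices.  In the distance
   max_i sum_j |V_ij - V'_ij|, stepB is a contraction of rate 2 theta_max < 1: the stochastic
   factor W(x) is non-expansive, and since rows of V - V' sum to zero, x moves by at most
   half the distance, which costs another theta_max times the distance.  Banach's fixed
   point argument gives an equilibrium Vs, exponential convergence to it, and uniqueness.
   At a fixed point (I - Theta W(xs)) Vs = I - Theta, so Vs (I - Theta)^-1 inverts
   I - Theta W(xs), which yields the explicit formula for xs; conversely any solution of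
   the formula is the social power of the fixed point of V |-> Theta W(z) V + I - Theta. *)

From Stdlib Require Import Reals Lra Lia ClassicalEpsilon.
Open Scope R_scope.

Lemma rsum_ext n f g : (forall i, (i < n)%nat -> f i = g i) -> rsum n f = rsum n g.
Proof.
  induction n as [|n IH]; intros H; simpl; [reflexivity|].
  rewrite IH, H by (lia || (intros; apply H; lia)); reflexivity.
Qed.

Lemma rsum_plus n f g : rsum n (fun i => f i + g i) = rsum n f + rsum n g.
Proof. induction n as [|n IH]; simpl; [lra | rewrite IH; lra]. Qed.

Lemma rsum_minus n f g : rsum n (fun i => f i - g i) = rsum n f - rsum n g.
Proof. induction n as [|n IH]; simpl; [lra | rewrite IH; lra]. Qed.

Lemma rsum_scal_l n c f : rsum n (fun i => c * f i) = c * rsum n f.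
Proof. induction n as [|n IH]; simpl; [lra | rewrite IH; lra]. Qed.

Lemma rsum_scal_r n c f : rsum n (fun i => f i * c) = rsum n f * c.
Proof. induction n as [|n IH]; simpl; [lra | rewrite IH; lra]. Qed.

Lemma rsum_const n c : rsum n (fun _ => c) = INR n * c.
Proof. induction n as [|n IH]; [simpl; lra | rewrite S_INR; cbn [rsum]; rewrite IH; lra]. Qed.

Lemma rsum_le_compat n f g : (forall i, (i < n)%nat -> f i <= g i) -> rsum n f <= rsum n g.
Proof.
  induction n as [|n IH]; intros H; simpl; [lra|].
  assert (rsum n f <= rsum n g) by (apply IH; intros; apply H; lia).
  assert (f n <= g n) by (apply H; lia). lra.
Qed.

Lemma rsum_nonneg n f : (forall i, (i < n)%nat -> 0 <= f i) -> 0 <= rsum n f.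
Proof.
  intros H. replace 0 with (rsum n (fun _ => 0)) by (rewrite rsum_const; lra).
  now apply rsum_le_compat.
Qed.

Lemma rsum_le_term n f i : (forall j, (j < n)%nat -> 0 <= f j) -> (i < n)%nat -> f i <= rsum n f.
Proof.
  induction n as [|n IH]; intros H Hi; simpl; [lia|].
  assert (0 <= rsum n f) by (apply rsum_nonneg; intros; apply H; lia).
  destruct (Nat.eq_dec i n) as [-> | Hin]; [lra|].
  assert (f i <= rsum n f) by (apply IH; [intros; apply H|]; lia).
  assert (0 <= f n) by (apply H; lia). lra.
Qed.

Lemma Rabs_rsum_le n f : Rabs (rsum n f) <= rsum n (fun i => Rabs (f i)).
Proof.
  induction n as [|n IH]; simpl; [rewrite Rabs_R0; lra|].
  eapply Rle_trans; [apply Rabs_triang | lra].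
Qed.

Lemma rsum_swap n m f :
  rsum n (fun i => rsum m (fun j => f i j)) = rsum m (fun j => rsum n (fun i => f i j)).
Proof.
  induction n as [|n IH]; simpl.
  - rewrite rsum_const; lra.
  - rewrite IH, <- rsum_plus; reflexivity.
Qed.

Lemma delta_sym i j : delta i j = delta j i.
Proof. unfold delta; now rewrite Nat.eqb_sym. Qed.

Lemma delta_refl i : delta i i = 1.
Proof. unfold delta; now rewrite Nat.eqb_refl. Qed.

Lemma delta_neq i j : i <> j -> delta i j = 0.
Proof. intros H; unfold delta; apply Nat.eqb_neq in H; now rewrite H. Qed.

Lemma delta_bounds i j : 0 <= delta i j <= 1.
Proof. unfold delta; destruct (Nat.eqb i j); lra. Qed.

Lemma rsum_delta_l n i f : (i < n)%nat -> rsum n (fun l => delta i l * f l) = f i.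
Proof.
  induction n as [|n IH]; intros Hi; simpl; [lia|].
  destruct (Nat.eq_dec i n) as [-> | Hin].
  - rewrite delta_refl, (rsum_ext n _ (fun _ => 0)), rsum_const; [lra|].
    intros; rewrite delta_neq by lia; lra.
  - rewrite IH, delta_neq by lia; lra.
Qed.

Lemma rsum_delta_r n i f : (i < n)%nat -> rsum n (fun l => f l * delta l i) = f i.
Proof.
  intros Hi; rewrite <- (rsum_delta_l n i f) by exact Hi.
  apply rsum_ext; intros; rewrite delta_sym; ring.
Qed.

Lemma pow_eventually_small rho K eps :
  0 <= rho < 1 -> 0 <= K -> 0 < eps -> exists N, K * rho ^ N < eps.
Proof.
  intros Hr HK He.
  destruct (pow_lt_1_zero rho ltac:(rewrite Rabs_pos_eq; lra) (eps / (K + 1)))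
    as [N HN]; [apply Rdiv_lt_0_compat; lra|].
  exists N. specialize (HN N (le_n N)).
  rewrite Rabs_pos_eq in HN by (apply pow_le; lra).
  apply (Rmult_lt_compat_l (K + 1)) in HN; [|lra].
  replace ((K + 1) * (eps / (K + 1))) with eps in HN by (field; lra).
  assert (0 <= rho ^ N) by (apply pow_le; lra). nra.
Qed.

Lemma geometric_bound_nonpos rho K a :
  0 <= rho < 1 -> (forall k, a <= K * rho ^ k) -> a <= 0.
Proof.
  intros Hr H. apply Rnot_lt_le; intros Ha.
  destruct (pow_eventually_small rho (Rabs K) a Hr (Rabs_pos K) Ha) as [N HN].
  assert (K * rho ^ N <= Rabs K * rho ^ N).
  { apply Rmult_le_compat_r; [apply pow_le; lra | apply RRle_abs]. }
  specialize (H N). lra.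
Qed.

Lemma geometric_bound_eq rho K a b :
  0 <= rho < 1 -> (forall k, Rabs (a - b) <= K * rho ^ k) -> a = b.
Proof.
  intros Hr H.
  assert (a - b <= 0).
  { apply (geometric_bound_nonpos rho K); auto.
    intros k; eapply Rle_trans; [apply RRle_abs | apply H]. }
  assert (b - a <= 0).
  { apply (geometric_bound_nonpos rho K); auto.
    intros k; rewrite Rabs_minus_sym in H; eapply Rle_trans; [apply RRle_abs | apply H]. }
  lra.
Qed.

Lemma geometric_tail_bound (u : nat -> R) A rho :
  0 <= A -> 0 <= rho < 1 -> (forall k, Rabs (u (S k) - u k) <= A * rho ^ k) ->
  forall k m, (k <= m)%nat -> Rabs (u m - u k) <= A * rho ^ k / (1 - rho).
Proof.
  intros HA Hr H k m Hkm.
  assert (Hsum : forall p, Rabs (u (p + k)%nat - u k) <= A * rho ^ k * (1 - rho ^ p) / (1 - rho)).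
  { induction p as [|p IH]; simpl.
    - replace (u k - u k) with 0 by ring. rewrite Rabs_R0. right; field; lra.
    - replace (u (S (p + k)) - u k)
        with ((u (S (p + k)) - u (p + k)%nat) + (u (p + k)%nat - u k)) by ring.
      eapply Rle_trans; [apply Rabs_triang|].
      eapply Rle_trans; [apply Rplus_le_compat; [apply H | apply IH]|].
      rewrite pow_add. right; field; lra. }
  replace m with (m - k + k)%nat by lia.
  eapply Rle_trans; [apply Hsum|].
  assert (0 <= rho ^ (m - k)) by (apply pow_le; lra).
  assert (0 <= A * rho ^ k) by (apply Rmult_le_pos; [|apply pow_le]; lra).
  unfold Rdiv. apply Rmult_le_compat_r; [apply Rlt_le, Rinv_0_lt_compat; lra | nra].
Qed.

Lemma geometric_limit (u : nat -> R) A rho :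
  0 <= A -> 0 <= rho < 1 -> (forall k, Rabs (u (S k) - u k) <= A * rho ^ k) ->
  exists l, forall k, Rabs (u k - l) <= A * rho ^ k / (1 - rho).
Proof.
  intros HA Hr H.
  pose proof (geometric_tail_bound u A rho HA Hr H) as Htail.
  assert (HA' : 0 <= A / (1 - rho))
    by (apply Rmult_le_pos; [|apply Rlt_le, Rinv_0_lt_compat]; lra).
  assert (Hcauchy : Cauchy_crit u).
  { intros eps He.
    destruct (pow_eventually_small rho (A / (1 - rho)) (eps / 2)) as [N HN]; auto; try lra.
    exists N; intros p q Hp Hq; unfold Rdist.
    replace (u p - u q) with ((u p - u N) - (u q - u N)) by ring.
    eapply Rle_lt_trans; [apply Rabs_triang|]. rewrite Rabs_Ropp.
    assert (A * rho ^ N / (1 - rho) = A / (1 - rho) * rho ^ N) by (field; lra).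
    pose proof (Htail N p Hp). pose proof (Htail N q Hq). lra. }
  destruct (R_complete u Hcauchy) as [l Hl].
  exists l; intros k. apply Rnot_lt_le; intros Hlt.
  destruct (Hl (Rabs (u k - l) - A * rho ^ k / (1 - rho))) as [N HN]; [lra|].
  set (m := Nat.max N k).
  specialize (HN m ltac:(lia)). unfold Rdist in HN.
  pose proof (Htail k m ltac:(lia)).
  assert (Rabs (u k - l) <= Rabs (u m - u k) + Rabs (u m - l)).
  { replace (u k - l) with (- (u m - u k) + (u m - l)) by ring.
    eapply Rle_trans; [apply Rabs_triang|]. rewrite Rabs_Ropp; lra. }
  lra.
Qed.

Definition mmul n (A B : mat) : mat := fun i j => rsum n (fun k => A i k * B k j).

Definition row_dist_le n (V V' : mat) r :=
  forall i, (i < n)%nat -> rsum n (fun j => Rabs (V i j - V' i j)) <= r.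

Lemma mmul_assoc n A B D i j : mmul n (mmul n A B) D i j = mmul n A (mmul n B D) i j.
Proof.
  unfold mmul.
  rewrite (rsum_ext n _ (fun l => rsum n (fun k => A i k * B k l * D l j)))
    by (intros; rewrite <- rsum_scal_r; reflexivity).
  rewrite rsum_swap. apply rsum_ext; intros.
  rewrite <- rsum_scal_l. apply rsum_ext; intros; ring.
Qed.

Lemma row_stochastic_entry n V i j :
  row_stochastic n V -> (i < n)%nat -> (j < n)%nat -> 0 <= V i j <= 1.
Proof.
  intros [Hpos Hsum] Hi Hj. split; auto.
  rewrite <- (Hsum i Hi). apply (rsum_le_term n (fun j => V i j)); auto.
Qed.

Lemma in_simplex_entry n x i : in_simplex n x -> (i < n)%nat -> 0 <= x i <= 1.
Proof. intros [Hpos Hsum] Hi. split; auto. rewrite <- Hsum. now apply rsum_le_term. Qed.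

Lemma row_stochastic_delta n : row_stochastic n delta.
Proof.
  split; [intros; apply delta_bounds|].
  intros i Hi. rewrite (rsum_ext n _ (fun l => delta i l * 1)) by (intros; ring).
  now apply (rsum_delta_l n i (fun _ => 1)).
Qed.

Lemma row_stochastic_mmul n A V :
  row_stochastic n A -> row_stochastic n V -> row_stochastic n (mmul n A V).
Proof.
  intros [HA1 HA2] [HV1 HV2]. split.
  - intros i j Hi Hj. apply rsum_nonneg; intros. apply Rmult_le_pos; auto.
  - intros i Hi. unfold mmul. rewrite rsum_swap, <- (HA2 i Hi).
    apply rsum_ext; intros l Hl. rewrite rsum_scal_l, HV2 by auto. ring.
Qed.

Lemma row_dist_le_entry n V V' r i j :
  row_dist_le n V V' r -> (i < n)%nat -> (j < n)%nat -> Rabs (V i j - V' i j) <= r.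
Proof.
  intros H Hi Hj. eapply Rle_trans; [|apply (H i Hi)].
  apply (rsum_le_term n (fun j => Rabs (V i j - V' i j))); auto.
  intros; apply Rabs_pos.
Qed.

Lemma row_dist_le_of_entry n V V' e :
  (forall i j, (i < n)%nat -> (j < n)%nat -> Rabs (V i j - V' i j) <= e) ->
  row_dist_le n V V' (INR n * e).
Proof. intros H i Hi. rewrite <- rsum_const. apply rsum_le_compat; auto. Qed.

Lemma row_dist_le_nonneg n V V' r :
  (1 <= n)%nat -> row_dist_le n V V' r -> 0 <= r.
Proof.
  intros Hn H. eapply Rle_trans; [|apply (H 0%nat); lia].
  apply rsum_nonneg; intros; apply Rabs_pos.
Qed.

Lemma row_dist_le_stochastic n V V' :
  row_stochastic n V -> row_stochastic n V' -> row_dist_le n V V' 2.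
Proof.
  intros [H1 H2] [H3 H4] i Hi.
  apply Rle_trans with (rsum n (fun j => V i j + V' i j)).
  - apply rsum_le_compat; intros j Hj.
    pose proof (H1 i j Hi Hj); pose proof (H3 i j Hi Hj).
    unfold Rabs; destruct Rcase_abs; lra.
  - rewrite rsum_plus, H2, H4 by auto; lra.
Qed.

Lemma row_dist_le_mmul_l n A V V' r :
  row_stochastic n A -> row_dist_le n V V' r -> row_dist_le n (mmul n A V) (mmul n A V') r.
Proof.
  intros [HA1 HA2] H i Hi. unfold mmul.
  apply Rle_trans with (rsum n (fun j => rsum n (fun l => A i l * Rabs (V l j - V' l j)))).
  - apply rsum_le_compat; intros j Hj. rewrite <- rsum_minus.
    eapply Rle_trans; [apply Rabs_rsum_le|]. apply rsum_le_compat; intros l Hl.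
    rewrite <- Rmult_minus_distr_l, Rabs_mult, (Rabs_pos_eq (A i l)) by auto. lra.
  - rewrite rsum_swap.
    apply Rle_trans with (rsum n (fun l => A i l * r)).
    + apply rsum_le_compat; intros l Hl. rewrite rsum_scal_l.
      apply Rmult_le_compat_l; auto.
    + rewrite rsum_scal_r, HA2 by auto. lra.
Qed.

(* |d_i| = |sum_(j <> i) d_j| <= sum_(j <> i) |d_j| *)
Lemma Rabs_le_half_rsum_abs n (d : vec) i :
  rsum n d = 0 -> (i < n)%nat -> 2 * Rabs (d i) <= rsum n (fun j => Rabs (d j)).
Proof.
  intros H0 Hi.
  assert (Hsplit : rsum n (fun j => Rabs (d j))
                   = rsum n (fun j => Rabs (d j - delta i j * d i)) + Rabs (d i)).
  { rewrite <- (rsum_delta_l n i (fun _ => Rabs (d i))) by exact Hi.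
    rewrite <- rsum_plus. apply rsum_ext; intros j Hj.
    destruct (Nat.eq_dec i j) as [-> | Hij].
    - rewrite delta_refl. replace (d j - 1 * d j) with 0 by ring. rewrite Rabs_R0; ring.
    - rewrite delta_neq by exact Hij. replace (d j - 0 * d i) with (d j) by ring. ring. }
  assert (Rabs (d i) <= rsum n (fun j => Rabs (d j - delta i j * d i))).
  { eapply Rle_trans; [|apply Rabs_rsum_le].
    rewrite rsum_minus, rsum_delta_l, H0 by exact Hi.
    rewrite Rabs_minus_sym, Rminus_0_r. lra. }
  lra.
Qed.

Lemma social_power_simplex n V :
  (1 <= n)%nat -> row_stochastic n V -> in_simplex n (social_power n V).
Proof.
  intros Hn [H1 H2]. assert (0 < INR n) by (apply lt_0_INR; lia). split.
  - intros i Hi. unfold social_power. apply Rmult_le_pos; [|apply Rlt_le, Rinv_0_lt_compat; auto].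
    apply rsum_nonneg; auto.
  - unfold social_power, Rdiv. rewrite rsum_scal_r, <- rsum_swap.
    rewrite (rsum_ext n _ (fun _ => 1)) by exact H2.
    rewrite rsum_const. field. lra.
Qed.

Lemma Rabs_social_power_sub_le n V V' j e :
  (1 <= n)%nat -> (forall k, (k < n)%nat -> Rabs (V k j - V' k j) <= e) ->
  Rabs (social_power n V j - social_power n V' j) <= e.
Proof.
  intros Hn H. assert (0 < INR n) by (apply lt_0_INR; lia).
  unfold social_power, Rdiv. rewrite <- Rmult_minus_distr_r, <- rsum_minus.
  rewrite Rabs_mult, (Rabs_pos_eq (/ INR n)) by (apply Rlt_le, Rinv_0_lt_compat; auto).
  apply (Rmult_le_reg_r (INR n)); auto.
  rewrite Rmult_assoc, Rinv_l, Rmult_1_r, Rmult_comm, <- rsum_const by lra.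
  eapply Rle_trans; [apply Rabs_rsum_le | now apply rsum_le_compat].
Qed.

Lemma social_power_row_dist n V V' r j :
  (1 <= n)%nat -> row_stochastic n V -> row_stochastic n V' -> row_dist_le n V V' r ->
  (j < n)%nat -> 2 * Rabs (social_power n V j - social_power n V' j) <= r.
Proof.
  intros Hn [HV1 HV2] [HV'1 HV'2] H Hj.
  cut (Rabs (social_power n V j - social_power n V' j) <= r / 2); [lra|].
  apply Rabs_social_power_sub_le; auto. intros k Hk.
  pose proof (Rabs_le_half_rsum_abs n (fun l => V k l - V' k l) j) as Hhalf.
  rewrite rsum_minus, HV2, HV'2 in Hhalf by exact Hk.
  specialize (Hhalf (Rminus_diag_eq 1 1 eq_refl) Hj). specialize (H k Hk). lra.
Qed.

Lemma Wmat_row_stochastic n C x :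
  row_stochastic n C -> in_simplex n x -> row_stochastic n (Wmat C x).
Proof.
  intros [HC1 HC2] Hx. split.
  - intros i j Hi Hj. unfold Wmat.
    pose proof (delta_bounds i j). pose proof (in_simplex_entry n x i Hx Hi).
    pose proof (HC1 i j Hi Hj). nra.
  - intros i Hi. unfold Wmat. rewrite rsum_plus, rsum_scal_l, HC2 by exact Hi.
    rewrite (rsum_delta_l n i (fun _ => x i)) by exact Hi. ring.
Qed.

Lemma mmul_Wmat n C x V i j : (i < n)%nat ->
  mmul n (Wmat C x) V i j = x i * V i j + (1 - x i) * mmul n C V i j.
Proof.
  intros Hi. unfold mmul, Wmat.
  rewrite (rsum_ext n _ (fun l => delta i l * (x i * V l j) + (1 - x i) * (C i l * V l j)))
    by (intros; ring).
  rewrite rsum_plus, rsum_scal_l, (rsum_delta_l n i (fun l => x i * V l j)) by exact Hi.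
  reflexivity.
Qed.

Lemma stepV_row_stochastic n C theta x V :
  row_stochastic n C -> in_simplex n x -> (forall i, (i < n)%nat -> 0 <= theta i <= 1) ->
  row_stochastic n V -> row_stochastic n (stepV n C theta x V).
Proof.
  intros HC Hx Ht HV.
  destruct (row_stochastic_mmul n _ V (Wmat_row_stochastic n C x HC Hx) HV) as [P1 P2].
  unfold mmul in P1, P2. split.
  - intros i j Hi Hj. unfold stepV.
    pose proof (P1 i j Hi Hj). pose proof (Ht i Hi). pose proof (delta_bounds i j). nra.
  - intros i Hi. unfold stepV.
    rewrite rsum_plus, rsum_scal_l, P2, (rsum_delta_l n i (fun _ => 1 - theta i)) by exact Hi.
    ring.
Qed.

Lemma stepV_ext n C theta x y V i j :
  (forall k, (k < n)%nat -> x k = y k) -> (i < n)%nat ->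
  stepV n C theta x V i j = stepV n C theta y V i j.
Proof. intros H Hi. unfold stepV, Wmat. now rewrite H. Qed.

Lemma stepV_contraction n C theta x V V' r t :
  row_stochastic n C -> in_simplex n x -> (forall i, (i < n)%nat -> 0 <= theta i <= t) ->
  row_dist_le n V V' r -> row_dist_le n (stepV n C theta x V) (stepV n C theta x V') (t * r).
Proof.
  intros HC Hx Ht H i Hi. destruct (Ht i Hi) as [Ht0 Hti].
  rewrite (rsum_ext n _ (fun j => theta i * Rabs (mmul n (Wmat C x) V i j
                                                 - mmul n (Wmat C x) V' i j))).
  2: { intros j Hj. rewrite <- (Rabs_pos_eq (theta i) Ht0), <- Rabs_mult.
       unfold stepV, mmul. f_equal; ring. }
  rewrite rsum_scal_l.
  pose proof (row_dist_le_mmul_l n _ V V' r (Wmat_row_stochastic n C x HC Hx) H i Hi).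
  pose proof (row_dist_le_nonneg n V V' r ltac:(lia) H). nra.
Qed.

Definition stepB n C theta (V : mat) : mat := stepV n C theta (social_power n V) V.

Lemma stepB_row_stochastic n C theta V :
  (1 <= n)%nat -> row_stochastic n C -> (forall i, (i < n)%nat -> 0 <= theta i <= 1) ->
  row_stochastic n V -> row_stochastic n (stepB n C theta V).
Proof.
  intros Hn HC Ht HV. apply stepV_row_stochastic; auto. now apply social_power_simplex.
Qed.

(* Moving x(V) changes row i by (x_i - x'_i)(V'_i - (C V')_i), whose l1 norm is at most
   2 |x_i - x'_i| <= r: this doubles the Lipschitz constant of stepV. *)
Lemma stepB_contraction n C theta V V' r t :
  (1 <= n)%nat -> row_stochastic n C -> (forall i, (i < n)%nat -> 0 <= theta i <= t) ->
  row_stochastic n V -> row_stochastic n V' -> row_dist_le n V V' r ->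
  row_dist_le n (stepB n C theta V) (stepB n C theta V') (2 * t * r).
Proof.
  intros Hn HC Ht HV HV' H i Hi. destruct (Ht i Hi) as [Ht0 Hti].
  set (x := social_power n V). set (x' := social_power n V').
  assert (Hx : in_simplex n x) by (now apply social_power_simplex).
  set (D1 := fun j => mmul n (Wmat C x) V i j - mmul n (Wmat C x) V' i j).
  set (D2 := fun j => (x i - x' i) * (V' i j - mmul n C V' i j)).
  rewrite (rsum_ext n _ (fun j => theta i * Rabs (D1 j + D2 j))).
  2: { intros j Hj. rewrite <- (Rabs_pos_eq (theta i) Ht0), <- Rabs_mult.
       unfold stepB, stepV, D1, D2. fold x x'. f_equal.
       fold (mmul n (Wmat C x) V i j) (mmul n (Wmat C x') V' i j).
       rewrite !mmul_Wmat by exact Hi. ring. }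
  assert (HD1 : rsum n (fun j => Rabs (D1 j)) <= r)
    by exact (row_dist_le_mmul_l n _ V V' r (Wmat_row_stochastic n C x HC Hx) H i Hi).
  assert (HD2 : rsum n (fun j => Rabs (D2 j)) <= r).
  { unfold D2.
    rewrite (rsum_ext n _ (fun j => Rabs (x i - x' i) * Rabs (V' i j - mmul n C V' i j)))
      by (intros; apply Rabs_mult).
    rewrite rsum_scal_l.
    assert (Hrow := row_dist_le_stochastic n V' _ HV' (row_stochastic_mmul n C V' HC HV') i Hi).
    assert (Hxi := social_power_row_dist n V V' r i Hn HV HV' H Hi). fold x x' in Hxi.
    pose proof (Rabs_pos (x i - x' i)). nra. }
  assert (HD : rsum n (fun j => Rabs (D1 j + D2 j)) <= 2 * r).
  { eapply Rle_trans; [apply rsum_le_compat; intros; apply Rabs_triang|].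
    rewrite rsum_plus. lra. }
  rewrite rsum_scal_l. pose proof (row_dist_le_nonneg n V V' r Hn H). nra.
Qed.

Lemma matrix_geometric_limit n (U : nat -> mat) A rho :
  0 <= A -> 0 <= rho < 1 -> (forall k, row_dist_le n (U (S k)) (U k) (A * rho ^ k)) ->
  exists L, forall k i j, (i < n)%nat -> (j < n)%nat ->
    Rabs (U k i j - L i j) <= A / (1 - rho) * rho ^ k.
Proof.
  intros HA Hr Hstep.
  assert (Hlim : forall p : nat * nat, exists l, (fst p < n)%nat -> (snd p < n)%nat ->
            forall k, Rabs (U k (fst p) (snd p) - l) <= A / (1 - rho) * rho ^ k).
  { intros [i j]; simpl.
    destruct (Nat.lt_ge_cases i n); [|exists 0; intros; lia].
    destruct (Nat.lt_ge_cases j n); [|exists 0; intros; lia].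
    destruct (geometric_limit (fun k => U k i j) A rho) as [l Hl]; auto.
    - intros k. now apply (row_dist_le_entry n (U (S k)) (U k)).
    - exists l; intros _ _ k. replace (A / (1 - rho) * rho ^ k) with (A * rho ^ k / (1 - rho))
        by (field; lra). apply Hl. }
  destruct (choice _ Hlim) as [f Hf].
  exists (fun i j => f (i, j)). intros k i j Hi Hj. exact (Hf (i, j) Hi Hj k).
Qed.

Lemma row_stochastic_geometric_limit n (U : nat -> mat) L B rho :
  0 <= rho < 1 -> (forall k, row_stochastic n (U k)) ->
  (forall k i j, (i < n)%nat -> (j < n)%nat -> Rabs (U k i j - L i j) <= B * rho ^ k) ->
  row_stochastic n L.
Proof.
  intros Hr HU HL. split.
  - intros i j Hi Hj. cut (- L i j <= 0); [lra|].
    apply (geometric_bound_nonpos rho B); auto. intros k.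
    pose proof (HL k i j Hi Hj). pose proof (RRle_abs (U k i j - L i j)).
    destruct (HU k) as [Hpos _]. pose proof (Hpos i j Hi Hj). lra.
  - intros i Hi. apply (geometric_bound_eq rho (INR n * B)); auto. intros k.
    destruct (HU k) as [_ Hsum]. rewrite <- (Hsum i Hi), <- rsum_minus, Rmult_assoc.
    eapply Rle_trans; [apply Rabs_rsum_le|].
    rewrite <- rsum_const. apply rsum_le_compat; intros j Hj.
    rewrite Rabs_minus_sym. auto.
Qed.

Section Contraction.

Variables (n : nat) (T : mat -> mat) (rho : R).
Hypothesis rho_bounds : 0 <= rho < 1.
Hypothesis T_row_stochastic : forall V, row_stochastic n V -> row_stochastic n (T V).
Hypothesis T_contraction : forall V V' r,
  row_stochastic n V -> row_stochastic n V' -> row_dist_le n V V' r ->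
  row_dist_le n (T V) (T V') (rho * r).

Definition is_fixpoint (V : mat) := forall i j, (i < n)%nat -> (j < n)%nat -> V i j = T V i j.

Lemma contraction_fixpoint_unique V V' :
  row_stochastic n V -> row_stochastic n V' -> is_fixpoint V -> is_fixpoint V' ->
  forall i j, (i < n)%nat -> (j < n)%nat -> V i j = V' i j.
Proof.
  intros HV HV' HfV HfV'.
  assert (Hdist : forall k, row_dist_le n V V' (2 * rho ^ k)).
  { induction k as [|k IH]; simpl.
    - rewrite Rmult_1_r. now apply row_dist_le_stochastic.
    - intros i Hi. replace (2 * (rho * rho ^ k)) with (rho * (2 * rho ^ k)) by ring.
      rewrite (rsum_ext n _ (fun j => Rabs (T V i j - T V' i j)))
        by (intros; rewrite HfV, HfV' by auto; reflexivity).
      now apply T_contraction. }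
  intros i j Hi Hj. apply (geometric_bound_eq rho 2); auto.
  intros k. now apply (row_dist_le_entry n V V').
Qed.

Lemma contraction_fixpoint V0 : row_stochastic n V0 ->
  exists L, row_stochastic n L /\ is_fixpoint L /\
    forall k i j, (i < n)%nat -> (j < n)%nat ->
      Rabs (Nat.iter k T V0 i j - L i j) <= 2 / (1 - rho) * rho ^ k.
Proof.
  intros HV0. set (U := fun k => Nat.iter k T V0).
  assert (HU : forall k, row_stochastic n (U k)) by (induction k; simpl; auto).
  assert (Hstep : forall k, row_dist_le n (U (S k)) (U k) (2 * rho ^ k)).
  { induction k as [|k IH]; simpl pow.
    - rewrite Rmult_1_r. now apply row_dist_le_stochastic.
    - replace (2 * (rho * rho ^ k)) with (rho * (2 * rho ^ k)) by ring.
      now apply (T_contraction (U (S k)) (U k)). }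
  destruct (matrix_geometric_limit n U 2 rho) as [L HL]; auto; [lra|].
  set (B := 2 / (1 - rho)). fold B in HL.
  assert (HB : 0 <= B) by (apply Rmult_le_pos; [|apply Rlt_le, Rinv_0_lt_compat]; lra).
  assert (HLstoch : row_stochastic n L)
    by exact (row_stochastic_geometric_limit n U L B rho rho_bounds HU HL).
  exists L. split; [exact HLstoch|]. split; [|exact HL].
  intros i j Hi Hj. apply (geometric_bound_eq rho (B * rho + rho * (INR n * B))); auto.
  intros k.
  replace (L i j - T L i j) with ((L i j - U (S k) i j) + (T (U k) i j - T L i j)) by (simpl; ring).
  eapply Rle_trans; [apply Rabs_triang|].
  rewrite Rmult_plus_distr_r. apply Rplus_le_compat.
  - rewrite Rabs_minus_sym. replace (B * rho * rho ^ k) with (B * rho ^ S k) by (simpl; ring).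
    auto.
  - replace (rho * (INR n * B) * rho ^ k) with (rho * (INR n * (B * rho ^ k))) by ring.
    apply (row_dist_le_entry n (T (U k)) (T L)); auto.
    apply T_contraction; auto. apply row_dist_le_of_entry; auto.
Qed.

End Contraction.

Definition IminusThetaW (theta : vec) (W : mat) : mat := fun i j => delta i j - theta i * W i j.

Lemma exists_argmax_Rabs n (d : vec) :
  (1 <= n)%nat -> exists i0, (i0 < n)%nat /\ forall i, (i < n)%nat -> Rabs (d i) <= Rabs (d i0).
Proof.
  induction n as [|n IH]; intros Hn; [lia|].
  destruct (Nat.eq_dec n 0) as [-> | Hn0].
  - exists 0%nat. split; [lia|]. intros i Hi. replace i with 0%nat by lia. lra.
  - destruct IH as [i0 [Hi0 Hmax]]; [lia|].
    destruct (Rle_lt_dec (Rabs (d n)) (Rabs (d i0))).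
    + exists i0. split; [lia|]. intros i Hi.
      destruct (Nat.eq_dec i n) as [-> | ]; [auto | apply Hmax; lia].
    + exists n. split; [lia|]. intros i Hi.
      destruct (Nat.eq_dec i n) as [-> | ]; [lra|]. specialize (Hmax i ltac:(lia)). lra.
Qed.

Lemma Rabs_sub_le_1 a b : 0 <= a <= 1 -> 0 <= b <= 1 -> Rabs (a - b) <= 1.
Proof. intros Ha Hb. unfold Rabs; destruct Rcase_abs; lra. Qed.

Lemma Rabs_le_0_eq a : Rabs a <= 0 -> a = 0.
Proof. intros H. destruct (Req_dec a 0); auto. pose proof (Rabs_pos_lt a). lra. Qed.

Lemma Rabs_le_contraction_eq_0 a t : t < 1 -> Rabs a <= t * Rabs a -> a = 0.
Proof. intros Ht H. apply Rabs_le_0_eq. pose proof (Rabs_pos a). nra. Qed.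

Section Invertibility.

Variables (n : nat) (W : mat) (theta : vec) (t : R).
Hypothesis W_row_stochastic : row_stochastic n W.
Hypothesis t_lt_1 : t < 1.
Hypothesis theta_bounds : forall i, (i < n)%nat -> 0 <= theta i <= t.

(* Evaluate the kernel equation at an entry of maximal modulus. *)
Lemma IminusThetaW_invertible : mat_invertible n (IminusThetaW theta W).
Proof.
  intros d Hd i Hi.
  destruct (exists_argmax_Rabs n d ltac:(lia)) as [i0 [Hi0 Hmax]].
  destruct W_row_stochastic as [HW1 HW2]. destruct (theta_bounds i0 Hi0) as [Ht0 Hti0].
  assert (Hd0 : d i0 = theta i0 * rsum n (fun k => W i0 k * d k)).
  { specialize (Hd i0 Hi0). unfold IminusThetaW in Hd.
    rewrite (rsum_ext n _ (fun k => delta i0 k * d k - theta i0 * (W i0 k * d k))) in Hd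
      by (intros; ring).
    rewrite rsum_minus, rsum_delta_l, rsum_scal_l in Hd by exact Hi0. lra. }
  assert (Havg : Rabs (rsum n (fun k => W i0 k * d k)) <= Rabs (d i0)).
  { eapply Rle_trans; [apply Rabs_rsum_le|].
    apply Rle_trans with (rsum n (fun k => W i0 k * Rabs (d i0))).
    - apply rsum_le_compat; intros k Hk. rewrite Rabs_mult, Rabs_pos_eq by auto.
      apply Rmult_le_compat_l; auto.
    - rewrite rsum_scal_r, HW2 by exact Hi0. lra. }
  assert (Hi0_zero : d i0 = 0).
  { apply (Rabs_le_contraction_eq_0 _ t t_lt_1).
    rewrite Hd0 at 1. rewrite Rabs_mult, Rabs_pos_eq by exact Ht0.
    pose proof (Rabs_pos (rsum n (fun k => W i0 k * d k))). nra. }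
  specialize (Hmax i Hi). rewrite Hi0_zero, Rabs_R0 in Hmax. now apply Rabs_le_0_eq.
Qed.

(* Sum the kernel equation over all rows: the l1 norm contracts by the factor t. *)
Lemma IminusThetaW_transpose_invertible :
  mat_invertible n (fun i j => IminusThetaW theta W j i).
Proof.
  intros y Hy. destruct W_row_stochastic as [HW1 HW2].
  set (s := rsum n (fun i => Rabs (y i))).
  assert (Hentry : forall i, (i < n)%nat ->
            Rabs (y i) <= rsum n (fun l => W l i * (theta l * Rabs (y l)))).
  { intros i Hi. specialize (Hy i Hi). unfold IminusThetaW in Hy.
    rewrite (rsum_ext n _ (fun l => delta i l * y l - W l i * theta l * y l)) in Hy
      by (intros; rewrite delta_sym; ring).
    rewrite rsum_minus, rsum_delta_l in Hy by exact Hi.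
    replace (y i) with (rsum n (fun l => W l i * theta l * y l)) by lra.
    eapply Rle_trans; [apply Rabs_rsum_le|]. apply rsum_le_compat; intros l Hl.
    destruct (theta_bounds l Hl).
    rewrite !Rabs_mult, (Rabs_pos_eq (W l i)), (Rabs_pos_eq (theta l)) by auto. lra. }
  assert (Hs : s <= t * s).
  { apply Rle_trans with (rsum n (fun i => rsum n (fun l => W l i * (theta l * Rabs (y l))))).
    - now apply rsum_le_compat.
    - unfold s. rewrite rsum_swap, <- rsum_scal_l. apply rsum_le_compat; intros l Hl.
      rewrite rsum_scal_r, HW2 by exact Hl. destruct (theta_bounds l Hl).
      pose proof (Rabs_pos (y l)). nra. }
  assert (Hs0 : s = 0).
  { assert (0 <= s) by (apply rsum_nonneg; intros; apply Rabs_pos). nra. }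
  intros i Hi. apply Rabs_le_0_eq. rewrite <- Hs0.
  apply (rsum_le_term n (fun i => Rabs (y i))); auto. intros; apply Rabs_pos.
Qed.

End Invertibility.

Lemma mmul_right_inverse_left_inverse n N P :
  mat_invertible n N -> (forall i j, (i < n)%nat -> (j < n)%nat -> mmul n N P i j = delta i j) ->
  forall i j, (i < n)%nat -> (j < n)%nat -> mmul n P N i j = delta i j.
Proof.
  intros HN HNP i j Hi Hj.
  cut (mmul n P N i j - delta i j = 0); [lra|].
  apply (HN (fun k => mmul n P N k j - delta k j)); auto. intros k Hk.
  rewrite (rsum_ext n _ (fun l => N k l * mmul n P N l j - N k l * delta l j)) by (intros; ring).
  rewrite rsum_minus, (rsum_delta_r n j (fun l => N k l)) by exact Hj.
  fold (mmul n N (mmul n P N) k j). rewrite <- mmul_assoc. unfold mmul at 1.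
  rewrite (rsum_ext n _ (fun l => delta k l * N l j)) by (intros; rewrite HNP; auto).
  rewrite (rsum_delta_l n k (fun l => N l j)) by exact Hk. ring.
Qed.

Lemma IminusThetaW_mmul_fixpoint n C theta x V i j :
  (i < n)%nat -> (j < n)%nat -> is_fixpoint n (stepV n C theta x) V ->
  mmul n (IminusThetaW theta (Wmat C x)) V i j = delta i j * (1 - theta i).
Proof.
  intros Hi Hj Hfix. unfold mmul, IminusThetaW.
  rewrite (rsum_ext n _ (fun k => delta i k * V k j - theta i * (Wmat C x i k * V k j)))
    by (intros; ring).
  rewrite rsum_minus, rsum_delta_l, rsum_scal_l, Hfix by assumption.
  unfold stepV. ring.
Qed.

Lemma IminusThetaW_right_inverse n C theta x V :
  (forall i, (i < n)%nat -> 1 - theta i <> 0) -> is_fixpoint n (stepV n C theta x) V ->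
  forall i j, (i < n)%nat -> (j < n)%nat ->
    mmul n (IminusThetaW theta (Wmat C x)) (fun k l => V k l / (1 - theta l)) i j = delta i j.
Proof.
  intros Hth1 Hfix i j Hi Hj. unfold mmul at 1, Rdiv.
  rewrite (rsum_ext n _ (fun k => IminusThetaW theta (Wmat C x) i k * V k j * / (1 - theta j)))
    by (intros; ring).
  rewrite rsum_scal_r. fold (mmul n (IminusThetaW theta (Wmat C x)) V i j).
  rewrite IminusThetaW_mmul_fixpoint by assumption.
  destruct (Nat.eq_dec i j) as [-> | Hij].
  - rewrite delta_refl. field. now apply Hth1.
  - rewrite delta_neq by exact Hij. ring.
Qed.

Lemma Mmat_transpose_IminusThetaW C theta x i l :
  Mmat C theta x i l = IminusThetaW theta (Wmat C x) l i.
Proof. unfold Mmat, IminusThetaW. rewrite delta_sym. ring. Qed.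

Section Equilibrium.

Variables (n : nat) (C : mat) (theta : vec) (t : R).
Hypothesis n_pos : (1 <= n)%nat.
Hypothesis C_row_stochastic : row_stochastic n C.
Hypothesis t_lt_1 : t < 1.
Hypothesis theta_bounds : forall i, (i < n)%nat -> 0 <= theta i <= t.

Let theta_le_1 i (Hi : (i < n)%nat) : 0 <= theta i <= 1.
Proof. destruct (theta_bounds i Hi); lra. Qed.

(* With [P = Vs (I - Theta)^-1 = (I - Theta W(xs))^-1], the witness is [y = P^T 1/n]. *)
Lemma power_formula_of_fixpoint Vs :
  row_stochastic n Vs -> is_fixpoint n (stepB n C theta) Vs ->
  power_formula n C theta (social_power n Vs).
Proof.
  intros HVs Hfix. set (xs := social_power n Vs).
  assert (HW : row_stochastic n (Wmat C xs))
    by (apply Wmat_row_stochastic; auto; now apply social_power_simplex).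
  set (N := IminusThetaW theta (Wmat C xs)).
  assert (Hth1 : forall i, (i < n)%nat -> 1 - theta i <> 0)
    by (intros i Hi; destruct (theta_bounds i Hi); lra).
  split.
  { intros y Hy. apply (IminusThetaW_transpose_invertible n (Wmat C xs) theta t); auto.
    intros i Hi. rewrite <- (Hy i Hi). apply rsum_ext; intros.
    now rewrite Mmat_transpose_IminusThetaW. }
  set (P := fun k l => Vs k l / (1 - theta l)).
  assert (HNP := IminusThetaW_right_inverse n C theta xs Vs Hth1 Hfix).
  assert (HPN := mmul_right_inverse_left_inverse n N P
                   (IminusThetaW_invertible n _ theta t HW t_lt_1 theta_bounds) HNP).
  assert (HnR : 0 < INR n) by (apply lt_0_INR; lia).
  exists (fun l => rsum n (fun k => P k l) / INR n). split.
  - intros i Hi.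
    rewrite (rsum_ext n _ (fun l => / INR n * rsum n (fun k => P k l * N l i))).
    2: { intros l Hl. rewrite Mmat_transpose_IminusThetaW, rsum_scal_r. fold N.
         unfold Rdiv. ring. }
    rewrite rsum_scal_l, <- rsum_swap.
    rewrite (rsum_ext n _ (fun k => delta i k * 1))
      by (intros k Hk; fold (mmul n P N k i); rewrite HPN, delta_sym by auto; ring).
    rewrite (rsum_delta_l n i (fun _ => 1)) by exact Hi. field. lra.
  - intros i Hi. unfold P, xs, social_power, Rdiv.
    rewrite rsum_scal_r. field. split; [lra | now apply Hth1].
Qed.

(* [V^T 1/n = V^T N^T y = (N V)^T y = (I - Theta) y] with [N = I - Theta W(z)] *)
Lemma social_power_of_power_formula z y V :
  (forall i, (i < n)%nat -> rsum n (fun l => Mmat C theta z i l * y l) = 1 / INR n) ->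
  (forall i, (i < n)%nat -> z i = (1 - theta i) * y i) ->
  is_fixpoint n (stepV n C theta z) V ->
  forall j, (j < n)%nat -> social_power n V j = z j.
Proof.
  intros Hy Hzy Hfix j Hj. set (N := IminusThetaW theta (Wmat C z)).
  unfold social_power, Rdiv. rewrite <- rsum_scal_r.
  rewrite (rsum_ext n _ (fun k => rsum n (fun l => y l * (N l k * V k j)))).
  2: { intros k Hk. rewrite <- Rdiv_1_l, <- (Hy k Hk), <- rsum_scal_l.
       apply rsum_ext; intros l Hl. rewrite Mmat_transpose_IminusThetaW. fold N. ring. }
  rewrite rsum_swap.
  rewrite (rsum_ext n _ (fun l => (y l * (1 - theta l)) * delta l j)).
  2: { intros l Hl. rewrite rsum_scal_l. fold (mmul n N V l j). unfold N.
       rewrite IminusThetaW_mmul_fixpoint by assumption. ring. }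
  rewrite (rsum_delta_r n j (fun l => y l * (1 - theta l))), Hzy by exact Hj. ring.
Qed.

Lemma equilibrium_of_power_formula z :
  in_simplex n z -> power_formula n C theta z -> exists V, is_equilibrium n C theta V z.
Proof.
  intros Hz [_ [y [Hy Hzy]]].
  destruct (contraction_fixpoint n (stepV n C theta z) t) with (V0 := delta)
    as [V [HV [Hfix _]]].
  - pose proof (theta_bounds 0%nat ltac:(lia)). lra.
  - intros V HV. now apply stepV_row_stochastic.
  - intros V V' r _ _ Hr. now apply stepV_contraction.
  - apply row_stochastic_delta.
  - exists V. split; [exact HV|]. split; [exact Hz|]. split; [exact Hfix|].
    intros j Hj. symmetry. now apply (social_power_of_power_formula z y).
Qed.

Section Contracting.

Hypothesis two_t_lt_1 : 2 * t < 1.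

Let rate_bounds : 0 <= 2 * t < 1.
Proof. pose proof (theta_bounds 0%nat ltac:(lia)); lra. Qed.

Let stepB_contracts V V' r :
  row_stochastic n V -> row_stochastic n V' -> row_dist_le n V V' r ->
  row_dist_le n (stepB n C theta V) (stepB n C theta V') (2 * t * r).
Proof. intros; now apply stepB_contraction. Qed.

Lemma equilibrium_fixpoint V x : is_equilibrium n C theta V x -> is_fixpoint n (stepB n C theta) V.
Proof.
  intros [_ [_ [Hfix Hx]]] i j Hi Hj. rewrite Hfix by assumption.
  apply stepV_ext; auto.
Qed.

Lemma equilibrium_social_power_unique V x V' x' :
  is_equilibrium n C theta V x -> is_equilibrium n C theta V' x' ->
  forall i, (i < n)%nat -> x i = x' i.
Proof.
  intros HVx HVx' i Hi.
  assert (HVV' := contraction_fixpoint_unique n (stepB n C theta) (2 * t)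
    rate_bounds stepB_contracts V V'
    (proj1 HVx) (proj1 HVx') (equilibrium_fixpoint V x HVx) (equilibrium_fixpoint V' x' HVx')).
  destruct HVx as [_ [_ [_ Hx]]], HVx' as [_ [_ [_ Hx']]].
  rewrite Hx, Hx' by exact Hi. unfold social_power. f_equal.
  apply rsum_ext; intros k Hk. auto.
Qed.

Lemma trajB_succ x0 k :
  Vtraj n C theta x0 (S k) = stepV n C theta (xtraj n C theta x0 k) (Vtraj n C theta x0 k) /\
  xtraj n C theta x0 (S k) = social_power n (Vtraj n C theta x0 (S k)).
Proof. unfold Vtraj, xtraj; simpl. now destruct (trajB n C theta x0 k). Qed.

(* Only from time 1 on: V(1) is built from the arbitrary x(0), later x(k) = V(k)^T 1/n. *)
Lemma Vtraj_succ_iter x0 k :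
  Vtraj n C theta x0 (S k) = Nat.iter k (stepB n C theta) (Vtraj n C theta x0 1).
Proof.
  induction k as [|k IH]; [reflexivity|].
  destruct (trajB_succ x0 (S k)) as [HV _]. destruct (trajB_succ x0 k) as [_ Hx].
  rewrite HV, Hx. simpl. now rewrite <- IH.
Qed.

Lemma trajectory_converges x0 :
  0 < t -> in_simplex n x0 ->
  exists Vs, row_stochastic n Vs /\ is_fixpoint n (stepB n C theta) Vs /\
    exists c, 0 <= c /\ forall k,
      (forall i j, (i < n)%nat -> (j < n)%nat ->
         Rabs (Vtraj n C theta x0 k i j - Vs i j) <= c * (2 * t) ^ k) /\
      (forall i, (i < n)%nat ->
         Rabs (xtraj n C theta x0 k i - social_power n Vs i) <= c * (2 * t) ^ k).
Proof.
  intros Ht0 Hx0. set (rho := 2 * t).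
  assert (Hrho : 0 < rho < 1) by (unfold rho; lra).
  assert (HV1 : row_stochastic n (Vtraj n C theta x0 1))
    by (apply stepV_row_stochastic; auto; apply row_stochastic_delta).
  destruct (contraction_fixpoint n (stepB n C theta) rho rate_bounds
              (fun V => stepB_row_stochastic n C theta V n_pos C_row_stochastic theta_le_1)
              stepB_contracts _ HV1) as [Vs [HVs [Hfix Hconv]]].
  set (B := 2 / (1 - rho)).
  assert (HB : 0 <= B) by (apply Rmult_le_pos; [|apply Rlt_le, Rinv_0_lt_compat]; lra).
  assert (HBrho : 0 <= B / rho) by (apply Rmult_le_pos; [|apply Rlt_le, Rinv_0_lt_compat]; lra).
  (* the shift by one step costs a factor 1 / rho; the entries at time 0 differ by at most 1 *)
  exists Vs. split; [exact HVs|]. split; [exact Hfix|].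
  exists (B / rho + 1). split; [lra|]. intros [|k].
  - unfold Vtraj, xtraj; simpl. rewrite Rmult_1_r. split.
    + intros i j Hi Hj. apply Rle_trans with 1; [|lra].
      apply Rabs_sub_le_1; [apply delta_bounds | now apply (row_stochastic_entry n)].
    + intros i Hi. apply Rle_trans with 1; [|lra].
      apply Rabs_sub_le_1; [now apply (in_simplex_entry n)|].
      apply (in_simplex_entry n); [now apply social_power_simplex | exact Hi].
  - assert (Hshift : B * rho ^ k <= (B / rho + 1) * rho ^ S k).
    { simpl. assert (0 <= rho ^ k) by (apply pow_le; lra).
      replace ((B / rho + 1) * (rho * rho ^ k)) with (B * rho ^ k + rho * rho ^ k)
        by (field; lra).
      assert (0 <= rho * rho ^ k) by (apply Rmult_le_pos; lra). lra. }
    assert (HVk : forall i j, (i < n)%nat -> (j < n)%nat ->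
              Rabs (Vtraj n C theta x0 (S k) i j - Vs i j) <= (B / rho + 1) * rho ^ S k).
    { intros i j Hi Hj. eapply Rle_trans; [|exact Hshift].
      rewrite Vtraj_succ_iter. now apply Hconv. }
    split; [exact HVk|].
    intros i Hi. destruct (trajB_succ x0 k) as [_ ->].
    apply Rabs_social_power_sub_le; auto.
Qed.

End Contracting.

End Equilibrium.

Lemma finite_upper_bound_lt n (f : vec) a b :
  a < b -> (forall i, (i < n)%nat -> f i < b) ->
  exists t, a <= t < b /\ forall i, (i < n)%nat -> f i <= t.
Proof.
  intros Hab. induction n as [|n IH]; intros Hf.
  - exists a. split; [lra | intros; lia].
  - destruct IH as [t [Ht Hft]]; [intros; apply Hf; lia|].
    exists (Rmax t (f n)). split.
    + split; [eapply Rle_trans; [|apply Rmax_l]; lra|].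
      apply Rmax_lub_lt; [lra | apply Hf; lia].
    + intros i Hi. destruct (Nat.eq_dec i n) as [-> | Hin]; [apply Rmax_r|].
      eapply Rle_trans; [|apply Rmax_l]. apply Hft; lia.
Qed.

Theorem theorem6 (n : nat) (C : mat) (theta : vec) (x0 : vec) :
  (2 <= n)%nat ->
  row_stochastic n C -> zero_diag n C ->
  (forall i, (i < n)%nat -> 0 <= theta i <= 1) ->
  (forall i, (i < n)%nat -> theta i < 1) ->
  (exists j, (j < n)%nat /\ 0 < theta j) ->
  (* theta_max < 1/2 *)
  (forall i, (i < n)%nat -> theta i < 1 / 2) ->
  in_simplex n x0 ->
  exists (Vs : mat) (xs : vec),
    is_equilibrium n C theta Vs xs /\
    (* xs is the unique equilibrium social power *)
    (forall (V' : mat) (x' : vec), is_equilibrium n C theta V' x' ->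
       forall i, (i < n)%nat -> x' i = xs i) /\
    (* xs is the unique point of Delta_n satisfying the explicit formula *)
    (in_simplex n xs /\ power_formula n C theta xs) /\
    (forall z : vec, in_simplex n z -> power_formula n C theta z ->
       forall i, (i < n)%nat -> z i = xs i) /\
    (* exponential convergence of the trajectory (V(k), x(k)) *)
    (exists (c rho : R), 0 <= c /\ 0 <= rho < 1 /\
       forall k : nat,
         (forall i j, (i < n)%nat -> (j < n)%nat ->
            Rabs (Vtraj n C theta x0 k i j - Vs i j) <= c * rho ^ k) /\
         (forall i, (i < n)%nat ->
            Rabs (xtraj n C theta x0 k i - xs i) <= c * rho ^ k)).
Proof.
  intros Hn HC _ Htheta _ _ Hhalf Hx0.
  assert (Hn1 : (1 <= n)%nat) by lia.
  destruct (finite_upper_bound_lt n theta (1 / 4) (1 / 2)) as [t [Ht Htheta_t]];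
    [lra | exact Hhalf |].
  assert (Hbounds : forall i, (i < n)%nat -> 0 <= theta i <= t)
    by (intros i Hi; split; [apply Htheta | apply Htheta_t]; auto).
  assert (Ht1 : t < 1) by lra.
  assert (H2t : 2 * t < 1) by lra.
  destruct (trajectory_converges n C theta t Hn1 HC Ht1 Hbounds H2t x0 ltac:(lra) Hx0)
    as [Vs [HVs [Hfix [c [Hc Hconv]]]]].
  set (xs := social_power n Vs).
  assert (Heq : is_equilibrium n C theta Vs xs).
  { split; [exact HVs|]. split; [now apply social_power_simplex|]. now split. }
  assert (Hunique : forall V x, is_equilibrium n C theta V x ->
                      forall i, (i < n)%nat -> x i = xs i)
    by exact (fun V x HV =>
                equilibrium_social_power_unique n C theta t Hn1 HC Hbounds H2t V x Vs xs HV Heq).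
  exists Vs, xs. split; [exact Heq|]. split; [exact Hunique|]. split; [|split].
  - split; [apply Heq|].
    exact (power_formula_of_fixpoint n C theta t Hn1 HC Ht1 Hbounds Vs HVs Hfix).
  - intros z Hz Hpf.
    destruct (equilibrium_of_power_formula n C theta t Hn1 HC Ht1 Hbounds z Hz Hpf) as [V HV].
    exact (Hunique V z HV).
  - exists c, (2 * t). split; [exact Hc|]. split; [lra | exact Hconv].
Qed.
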